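(* For every $\mathcal{ALC}$-formula $\varphi$ and every interpretation $M$, $\mathcal{C}(\varphi,M)\equiv\mathcal{C}_s(\varphi,M)$.
   Context: $\mathcal{ALC}$ concepts: $C::=A\mid\neg C\mid(C\sqcap C)\mid\exists r.C$. $\mathcal{ALC}$-formulae: $\phi::=\alpha\mid\neg\phi\mid(\phi\wedge\phi)$, atomic $\alpha::=C(a)\mid r(a,b)\mid(C=\top)$; $\neg\neg\psi$ identified with $\psi$; $\vee,\bot$ usual abbreviations. A literal is an atomic formula or its negation. Interpretations have a countable nonempty domain with standard semantics; $\equiv$ is logical equivalence (same models). $\mathrm{Sub}(\alpha)=\mathrm{Sub}(\neg\alpha)=\{\alpha,\neg\alpha\}$ for atomic $\alpha$; $\mathrm{Sub}(\psi\wedge\psi')=\mathrm{Sub}(\neg(\psi\wedge\psi'))=\{\psi\wedge\psi',\neg(\psi\wedge\psi')\}\cup\mathrm{Sub}(\psi)\cup\mathrm{Sub}(\psi')$. $\mathrm{con}(\varphi)$: smallest set of concepts containing $C$ whenever $(C=\top)$ or $C(a)$ is in $\mathrm{Sub}(\varphi)$, closed under subconcepts of $\sqcap$ and $\exists r.\cdot$ and under single negation. $\mathrm{ind}(\varphi)$: individual names in $\varphi$. Concept type for $\varphi$: $c\subseteq\mathrm{con}(\varphi)$ with $D\in c$ iff $\neg D\notin c$ and $D\sqcap E\in c$ iff $\{D,E\}\subseteq c$. Formula type for $\varphi$: $f\subseteq\mathrm{Sub}(\varphi)$ with $\psi\in f$ iff $\neg\psi\notin f$ and $\psi\wedge\psi'\in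 f$ iff $\{\psi,\psi'\}\subseteq f$ (for members of $\mathrm{Sub}(\varphi)$). Model candidate $(T,o,f)$: $T$ set of concept types, $o:\mathrm{ind}(\varphi)\to T$, $f$ formula type, $\varphi\in f$, $C(a)\in f\Rightarrow C\in o(a)$, $r(a,b)\in f\Rightarrow\{\neg C\mid\neg\exists r.C\in o(a)\}\subseteq o(b)$. Quasimodel: model candidate where each $\exists r.D\in c\in T$ has $c'\in T$ with $\{D\}\cup\{\neg E\mid\neg\exists r.E\in c\}\subseteq c'$; $\neg C\in c\in T$ implies $(C=\top)\notin f$; $\neg(C=\top)\in f$ implies some $c\in T$ with $C\notin c$; $T\neq\emptyset$. $\mathrm{ftypes}(\varphi)=\{f\mid(T,o,f)$ quasimodel for $\varphi\}$. For interpretation $I$: $\mathrm{qm}(\varphi,I)=(T,o,f)$ with $T=\{c(x)\mid x\in\Delta^I\}$, $c(x)=\{C\in\mathrm{con}(\varphi)\mid x\in C^I\}$, $o(a)=c(a^I)$, $f=\{\psi\in\mathrm{Sub}(\varphi)\mid I\models\psi\}$. $\mathrm{lit}(f)$: literals in $f$. $\mathrm{qfilter}(\varphi,M)=\mathrm{ftypes}(\varphi)\setminus\{f\}$ where $\mathrm{qm}(\varphi,M)=(T,o,f)$. $\mathcal{C}(\varphi,M)=\bigvee_{f\in\mathrm{qfilter}(\varphi,M)}\bigwedge\mathrm{lit}(f)$ if $M\models\varphi$ and $\mathrm{qfilter}(\varphi,M)\ne\emptyset$; $\bot$ if $M\models\varphi$ and $\mathrm{qfilter}(\varphi,M)=\emptyset$;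 $\varphi$ otherwise. $\mathcal{C}_s(\varphi,M)=\varphi\wedge\neg(\bigwedge\mathrm{lit}(f))$ if $M\models\varphi$, where $\mathrm{qm}(\varphi,M)=(T,o,f)$; and $\mathcal{C}_s(\varphi,M)=\varphi$ otherwise. *)

From Stdlib Require Import List Bool Classical ClassicalEpsilon.
Import ListNotations.

Inductive concept : Type :=
  | CAt  : nat -> concept
  | CNeg : concept -> concept
  | CAnd : concept -> concept -> concept
  | CEx  : nat -> concept -> concept.

Inductive atom : Type :=
  | AConc : concept -> nat -> atom
  | ARole : nat -> nat -> nat -> atom
  | ATop  : concept -> atom.

Inductive formula : Type :=
  | FAt  : atom -> formula
  | FNeg : formula -> formula
  | FAnd : formula -> formula -> formula.

(* Negation modulo the identification ¬¬ψ = ψ *)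
Definition cneg (C : concept) : concept :=
  match C with CNeg D => D | _ => CNeg C end.
Definition fneg (p : formula) : formula :=
  match p with FNeg q => q | _ => FNeg p end.

Fixpoint cnf (C : concept) : concept :=
  match C with
  | CAt A => CAt A
  | CNeg D => cneg (cnf D)
  | CAnd D E => CAnd (cnf D) (cnf E)
  | CEx r D => CEx r (cnf D)
  end.
Definition anf (a : atom) : atom :=
  match a with
  | AConc C x => AConc (cnf C) x
  | ARole r x y => ARole r x y
  | ATop C => ATop (cnf C)
  end.
Fixpoint fnf (p : formula) : formula :=
  match p with
  | FAt a => FAt (anf a)
  | FNeg q => fneg (fnf q)
  | FAnd q r => FAnd (fnf q) (fnf r)
  end.

Definition fbot : formula :=
  FAnd (FAt (ATop (CAt 0))) (FNeg (FAt (ATop (CAt 0)))).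
Definition ftop : formula := FNeg fbot.
Definition FOr (p q : formula) : formula := FNeg (FAnd (FNeg p) (FNeg q)).

Fixpoint bigAnd (l : list formula) : formula :=
  match l with
  | [] => ftop
  | [x] => x
  | x :: l' => FAnd x (bigAnd l')
  end.
Fixpoint bigOr (l : list formula) : formula :=
  match l with
  | [] => fbot
  | [x] => x
  | x :: l' => FOr x (bigOr l')
  end.

Record interp : Type := {
  dom : Type;
  dom_nonempty : inhabited dom;
  dom_countable : exists enc : dom -> nat, forall x y, enc x = enc y -> x = y;
  cint : nat -> dom -> Prop;
  rint : nat -> dom -> dom -> Prop;
  iint : nat -> dom
}.

Fixpoint csem (I : interp) (C : concept) : dom I -> Prop :=
  match C with
  | CAt A => fun x => cint I A x
  | CNeg D => fun x => ~ csem I D x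
  | CAnd D E => fun x => csem I D x /\ csem I E x
  | CEx r D => fun x => exists y, rint I r x y /\ csem I D y
  end.

Definition asem (I : interp) (a : atom) : Prop :=
  match a with
  | AConc C x => csem I C (iint I x)
  | ARole r x y => rint I r (iint I x) (iint I y)
  | ATop C => forall x : dom I, csem I C x
  end.

Fixpoint fsem (I : interp) (p : formula) : Prop :=
  match p with
  | FAt a => asem I a
  | FNeg q => ~ fsem I q
  | FAnd q r => fsem I q /\ fsem I r
  end.

Definition fequiv (p q : formula) : Prop :=
  forall I : interp, fsem I p <-> fsem I q.

(* Sub on formulae (meant to be applied to normal forms, where it agrees
   with the paper's definition; Sub(¬ψ) = Sub(ψ)). *)
Fixpoint Sub (p : formula) : list formula :=
  match p with
  | FAt a => [FAt a; FNeg (FAt a)]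
  | FNeg q => Sub q
  | FAnd q r => [FAnd q r; FNeg (FAnd q r)] ++ Sub q ++ Sub r
  end.

Fixpoint csub (C : concept) : list concept :=
  match C with
  | CAt _ => [C]
  | CNeg D => C :: csub D
  | CAnd D E => C :: csub D ++ csub E
  | CEx _ D => C :: csub D
  end.

Definition atom_concepts (p : formula) : list concept :=
  match p with
  | FAt (AConc C _) => [C]
  | FAt (ATop C) => [C]
  | _ => []
  end.

Definition atom_inds (p : formula) : list nat :=
  match p with
  | FAt (AConc _ a) => [a]
  | FAt (ARole _ a b) => [a; b]
  | _ => []
  end.

(* con(φ): smallest set containing the concepts of atoms of Sub(φ),
   closed under subconcepts and single negation *)
Definition con (phi : formula) : list concept :=
  let L := flat_map csub (flat_map atom_concepts (Sub (fnf phi))) in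
  L ++ map cneg L.

Definition ind (phi : formula) : list nat :=
  flat_map atom_inds (Sub (fnf phi)).

Definition SubN (phi : formula) : list formula := Sub (fnf phi).

Definition is_ctype (phi : formula) (c : concept -> Prop) : Prop :=
  (forall C, c C -> In C (con phi)) /\
  (forall D, In D (con phi) -> (c D <-> ~ c (cneg D))) /\
  (forall D E, In (CAnd D E) (con phi) -> (c (CAnd D E) <-> c D /\ c E)).

Definition is_ftype (phi : formula) (f : list formula) : Prop :=
  incl f (SubN phi) /\
  (forall p, In p (SubN phi) -> (In p f <-> ~ In (fneg p) f)) /\
  (forall p q, In (FAnd p q) (SubN phi) ->
      (In (FAnd p q) f <-> In p f /\ In q f)).

Definition model_candidate (phi : formula) (T : (concept -> Prop) -> Prop)
  (o : nat -> concept -> Prop) (f : list formula) : Prop :=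
  (forall c, T c -> is_ctype phi c) /\
  (forall a, In a (ind phi) -> T (o a)) /\
  is_ftype phi f /\
  In (fnf phi) f /\
  (forall C a, In (FAt (AConc C a)) f -> o a C) /\
  (forall r a b, In (FAt (ARole r a b)) f ->
     forall C, o a (CNeg (CEx r C)) -> o b (cneg C)).

Definition quasimodel (phi : formula) (T : (concept -> Prop) -> Prop)
  (o : nat -> concept -> Prop) (f : list formula) : Prop :=
  model_candidate phi T o f /\
  (forall c r D, T c -> c (CEx r D) ->
     exists c', T c' /\ c' D /\
       (forall E, c (CNeg (CEx r E)) -> c' (cneg E))) /\
  (forall c C, T c -> c (cneg C) -> ~ In (FAt (ATop C)) f) /\
  (forall C, In (FNeg (FAt (ATop C))) f -> exists c, T c /\ ~ c C) /\
  (exists c, T c).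

Definition in_ftypes (phi : formula) (f : list formula) : Prop :=
  exists T o, quasimodel phi T o f.

Definition pdec (P : Prop) : bool :=
  if excluded_middle_informative P then true else false.

Definition qm_f (phi : formula) (M : interp) : list formula :=
  filter (fun p => pdec (fsem M p)) (SubN phi).

Definition is_literal (p : formula) : bool :=
  match p with
  | FAt _ => true
  | FNeg (FAt _) => true
  | _ => false
  end.

Definition lit (f : list formula) : list formula := filter is_literal f.

Definition seteq (f g : list formula) : Prop := forall p, In p f <-> In p g.

Fixpoint sublists {A : Type} (l : list A) : list (list A) :=
  match l with
  | [] => [[]]
  | x :: l' => let s := sublists l' in map (cons x) s ++ s
  end.

(* qfilter(φ, M) = ftypes(φ) \ {f_M}, enumerated as a list (every subset of
   Sub(φ) is represented by some sublist) *)
Definition qfilter (phi : formula) (M : interp) : list (list formula) :=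
  filter (fun f => pdec (in_ftypes phi f /\ ~ seteq f (qm_f phi M)))
         (sublists (SubN phi)).

Definition Cop (phi : formula) (M : interp) : formula :=
  if pdec (fsem M phi) then
    match qfilter phi M with
    | [] => fbot
    | L => bigOr (map (fun f => bigAnd (lit f)) L)
    end
  else phi.

Definition Csop (phi : formula) (M : interp) : formula :=
  if pdec (fsem M phi) then FAnd phi (FNeg (bigAnd (lit (qm_f phi M))))
  else phi.

From Stdlib Require Import List Classical ClassicalEpsilon.

(* A formula type is determined by its literals: if every literal of a
   formula type f for φ holds in I, then f is the set of members of Sub(φ)
   true in I, i.e. the formula type of qm(φ, I).  When I ⊨ φ, qm(φ, I) is a
   quasimodel, and every member of ftypes(φ) contains φ.  Hence, for M ⊨ φ,
   both C(φ, M) and C_s(φ, M) hold in I exactly when I ⊨ φ and the formula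
   types of qm(φ, I) and qm(φ, M) differ. *)

Lemma pdec_true (P : Prop) : pdec P = true <-> P.
Proof.
  unfold pdec; destruct (excluded_middle_informative P); split; intro H;
    auto; try discriminate; contradiction.
Qed.

Lemma pdec_false (P : Prop) : ~ P -> pdec P = false.
Proof.
  unfold pdec; destruct (excluded_middle_informative P); tauto.
Qed.

Lemma csem_cneg I C x : csem I (cneg C) x <-> ~ csem I C x.
Proof. destruct C; simpl; tauto. Qed.

Lemma csem_cnf I C x : csem I (cnf C) x <-> csem I C x.
Proof.
  revert x; induction C as [A | C IH | C IHC D IHD | r C IH]; intro x; simpl.
  - reflexivity.
  - rewrite csem_cneg, IH; reflexivity.
  - rewrite IHC, IHD; reflexivity.
  - split; intros [y [Hr Hy]]; exists y; split; auto; apply IH; auto.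
Qed.

Lemma fsem_fneg I p : fsem I (fneg p) <-> ~ fsem I p.
Proof. destruct p; simpl; tauto. Qed.

Lemma fsem_fnf I p : fsem I (fnf p) <-> fsem I p.
Proof.
  induction p as [[C a | r a b | C] | p IH | p IHp q IHq]; simpl.
  - apply csem_cnf.
  - reflexivity.
  - split; intros H x; apply csem_cnf; auto.
  - rewrite fsem_fneg, IH; reflexivity.
  - rewrite IHp, IHq; reflexivity.
Qed.

Lemma fsem_bigAnd_cons I p l :
  fsem I (bigAnd (p :: l)) <-> fsem I p /\ fsem I (bigAnd l).
Proof. destruct l; simpl; tauto. Qed.

Lemma fsem_bigAnd I l : fsem I (bigAnd l) <-> forall p, In p l -> fsem I p.
Proof.
  induction l as [|q l IH]; [simpl; tauto|].
  rewrite fsem_bigAnd_cons, IH; simpl.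
  split; [intros [Hq Hl] p [<- | Hp]; auto | auto].
Qed.

Lemma fsem_bigOr_cons I p l :
  fsem I (bigOr (p :: l)) <-> fsem I p \/ fsem I (bigOr l).
Proof.
  destruct l; simpl; [tauto|].
  destruct (classic (fsem I p)); [tauto|].
  split; [intro H0; right; apply NNPP; tauto | tauto].
Qed.

Lemma fsem_bigOr I l : fsem I (bigOr l) <-> exists p, In p l /\ fsem I p.
Proof.
  induction l as [|q l IH]; [simpl; firstorder|].
  rewrite fsem_bigOr_cons, IH; simpl.
  split.
  - intros [Hq | [p [Hp Hs]]]; eauto.
  - intros [p [[<- | Hp] Hs]]; eauto.
Qed.

(* [Sub (FNeg (FNeg q))] need not contain [FNeg (FNeg q)], so membership of a
   formula in its own [Sub] relies on this invariant of normal forms. *)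
Fixpoint dneg_free (p : formula) : Prop :=
  match p with
  | FAt _ => True
  | FNeg q => (match q with FNeg _ => False | _ => True end) /\ dneg_free q
  | FAnd q r => dneg_free q /\ dneg_free r
  end.

Lemma dneg_free_fneg p : dneg_free p -> dneg_free (fneg p).
Proof. destruct p; simpl; tauto. Qed.

Lemma dneg_free_fnf p : dneg_free (fnf p).
Proof. induction p; simpl; auto using dneg_free_fneg. Qed.

Lemma Sub_self p : dneg_free p -> In p (Sub p).
Proof.
  destruct p as [a | [] | p q]; simpl; tauto.
Qed.

Lemma Sub_FNeg x p : In (FNeg p) (Sub x) -> In p (Sub x).
Proof.
  induction x as [a | x IH | x IHx y IHy]; simpl; intro H.
  - destruct H as [H | [H | []]]; inversion H; auto.
  - auto.
  - destruct H as [H | [H | H]]; try discriminate.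
    + inversion H; auto.
    + rewrite in_app_iff in *; tauto.
Qed.

Lemma Sub_fneg x p : In p (Sub x) -> In (fneg p) (Sub x).
Proof.
  induction x as [a | x IH | x IHx y IHy]; simpl; intro H.
  - destruct H as [<- | [<- | []]]; simpl; auto.
  - auto.
  - rewrite in_app_iff in *.
    destruct H as [<- | [<- | H]]; simpl; auto.
    destruct p; simpl in *; tauto.
Qed.

Lemma Sub_FAnd x p q :
  dneg_free x -> In (FAnd p q) (Sub x) -> In p (Sub x) /\ In q (Sub x).
Proof.
  induction x as [a | x IH | x IHx y IHy]; simpl; intros Hx H.
  - destruct H as [H | [H | []]]; discriminate.
  - tauto.
  - rewrite !in_app_iff in *.
    destruct H as [H | [H | H]]; try discriminate.
    + inversion H; subst; pose proof (Sub_self _ (proj1 Hx));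
        pose proof (Sub_self _ (proj2 Hx)); tauto.
    + firstorder.
Qed.

Lemma In_lit f p : In p (lit f) <-> In p f /\ is_literal p = true.
Proof. apply filter_In. Qed.

Lemma In_qm_f phi I p : In p (qm_f phi I) <-> In p (SubN phi) /\ fsem I p.
Proof. unfold qm_f; rewrite filter_In, pdec_true; reflexivity. Qed.

Lemma qm_f_ftype phi I : is_ftype phi (qm_f phi I).
Proof.
  split; [|split].
  - intros p H; apply In_qm_f in H; tauto.
  - intros p Hp; rewrite !In_qm_f, fsem_fneg.
    pose proof (Sub_fneg _ _ Hp); tauto.
  - intros p q Hpq; rewrite !In_qm_f.
    destruct (Sub_FAnd _ _ _ (dneg_free_fnf phi) Hpq); simpl; tauto.
Qed.

Lemma qm_f_lit_sem phi I p : In p (lit (qm_f phi I)) -> fsem I p.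
Proof. rewrite In_lit, In_qm_f; tauto. Qed.

Lemma ftype_mem_sem phi f I :
  is_ftype phi f -> (forall p, In p (lit f) -> fsem I p) ->
  forall p, In p (SubN phi) -> (In p f <-> fsem I p).
Proof.
  intros [_ [Hneg Hand]] Hlit.
  induction p as [a | p IH | p IHp q IHq]; intro Hs.
  - split; [intro H; apply Hlit, In_lit; auto|].
    intro Ha; apply NNPP; intro Hna.
    assert (Hf : In (FNeg (FAt a)) f) by (apply NNPP; rewrite (Hneg _ Hs) in Hna; tauto).
    exact (Hlit _ (proj2 (In_lit _ _) (conj Hf eq_refl)) Ha).
  - rewrite (Hneg _ Hs); simpl; rewrite (IH (Sub_FNeg _ _ Hs)); reflexivity.
  - destruct (Sub_FAnd _ _ _ (dneg_free_fnf phi) Hs) as [Hp Hq].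
    rewrite (Hand _ _ Hs); simpl; rewrite (IHp Hp), (IHq Hq); reflexivity.
Qed.

Lemma ftype_lit_sem_iff phi f I : is_ftype phi f ->
  (forall p, In p (lit f) -> fsem I p) <-> seteq f (qm_f phi I).
Proof.
  intro Hf; split.
  - intros Hlit p; rewrite In_qm_f.
    pose proof (ftype_mem_sem _ _ _ Hf Hlit p).
    pose proof (proj1 Hf p); tauto.
  - intros Heq p Hp; apply In_lit in Hp as [Hp _].
    apply Heq, In_qm_f in Hp; tauto.
Qed.

Definition direct_subconcept (E D : concept) : Prop :=
  match D with
  | CAt _ => False
  | CNeg X => E = X
  | CAnd X Y => E = X \/ E = Y
  | CEx _ X => E = X
  end.

Lemma csub_self C : In C (csub C).
Proof. destruct C; simpl; auto. Qed.

Lemma csub_direct_subconcept C D E :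
  In D (csub C) -> direct_subconcept E D -> In E (csub C).
Proof.
  induction C as [A | C IH | C IHC C' IHC' | r C IH]; simpl;
    intros H HED; rewrite ?in_app_iff in *.
  - destruct H as [<- | []]; contradiction.
  - destruct H as [<- | H]; [simpl in HED; subst; auto using csub_self | eauto].
  - destruct H as [<- | H]; [destruct HED; subst; auto using csub_self|].
    destruct H; eauto.
  - destruct H as [<- | H]; [simpl in HED; subst; auto using csub_self | eauto].
Qed.

Definition con_base (phi : formula) : list concept :=
  flat_map csub (flat_map atom_concepts (SubN phi)).

Lemma In_con phi D :
  In D (con phi) <-> In D (con_base phi) \/ exists D0, D = cneg D0 /\ In D0 (con_base phi).
Proof.
  unfold con; rewrite in_app_iff, in_map_iff; fold (SubN phi) (con_base phi).
  firstorder.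
Qed.

Lemma con_base_direct_subconcept phi D E :
  In D (con_base phi) -> direct_subconcept E D -> In E (con_base phi).
Proof.
  unfold con_base; rewrite !in_flat_map; intros [C [HC HD]] HED.
  eauto using csub_direct_subconcept.
Qed.

Lemma con_direct_subconcept phi D E :
  In D (con phi) -> direct_subconcept E D -> In E (con phi).
Proof.
  rewrite !In_con; intros [HD | [D0 [-> HD0]]] HED; eauto using con_base_direct_subconcept.
  left; destruct D0 as [A | D0 | D0 D1 | r D0]; simpl in HED; try (subst; assumption).
  apply (con_base_direct_subconcept _ D0); [|exact HED].
  apply (con_base_direct_subconcept _ _ _ HD0); reflexivity.
Qed.

Lemma con_cneg phi D : In D (con phi) -> In (cneg D) (con phi).
Proof.
  intro HD; apply In_con.
  destruct (proj1 (In_con _ _) HD) as [HD' | [D0 [-> HD0]]]; eauto.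
  left; destruct D0 as [A | D1 | D1 D2 | r D1]; simpl; auto.
  destruct D1 as [A | D2 | D2 D3 | r D2]; simpl; auto.
  apply (con_base_direct_subconcept _ (CNeg D2)); [|reflexivity].
  apply (con_base_direct_subconcept _ _ _ HD0); reflexivity.
Qed.

Lemma con_atom phi C a : In (FAt (AConc C a)) (SubN phi) -> In C (con phi).
Proof.
  intro H; apply In_con; left; apply in_flat_map.
  exists C; split; [|apply csub_self].
  apply in_flat_map; exists (FAt (AConc C a)); simpl; auto.
Qed.

Lemma con_neg_exists phi r E :
  In (CNeg (CEx r E)) (con phi) -> In (cneg E) (con phi).
Proof.
  intro H; apply con_cneg.
  apply (con_direct_subconcept _ (CEx r E)); [|reflexivity].
  apply (con_direct_subconcept _ _ _ H); reflexivity.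
Qed.

Definition ctype_of (phi : formula) (I : interp) (x : dom I) (C : concept) : Prop :=
  In C (con phi) /\ csem I C x.

Lemma ctype_of_is_ctype phi I x : is_ctype phi (ctype_of phi I x).
Proof.
  unfold ctype_of; split; [|split].
  - tauto.
  - intros D HD; rewrite csem_cneg; pose proof (con_cneg _ _ HD); tauto.
  - intros D E HDE.
    pose proof (con_direct_subconcept _ _ D HDE (or_introl eq_refl)).
    pose proof (con_direct_subconcept _ _ E HDE (or_intror eq_refl)).
    simpl; tauto.
Qed.

Lemma ctype_of_neg_exists phi I r E x y :
  ctype_of phi I x (CNeg (CEx r E)) -> rint I r x y -> ctype_of phi I y (cneg E).
Proof.
  intros [HE Hx] Hr; split; [exact (con_neg_exists _ _ _ HE)|].
  rewrite csem_cneg; intro Hy; apply Hx; exists y; auto.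
Qed.

Lemma qm_f_in_ftypes phi I : fsem I phi -> in_ftypes phi (qm_f phi I).
Proof.
  intro Hphi.
  exists (fun c => exists x, c = ctype_of phi I x), (fun a => ctype_of phi I (iint I a)).
  split; [split; [|split; [|split; [|split; [|split]]]] | split; [|split; [|split]]].
  - intros c [x ->]; apply ctype_of_is_ctype.
  - intros a _; eauto.
  - apply qm_f_ftype.
  - apply In_qm_f; split; [apply Sub_self, dneg_free_fnf | apply fsem_fnf, Hphi].
  - intros C a H; apply In_qm_f in H as [Hs Hf]; exact (conj (con_atom _ _ _ Hs) Hf).
  - intros r a b H C Hc; apply In_qm_f in H as [_ Hr].
    exact (ctype_of_neg_exists _ _ _ _ _ _ Hc Hr).
  - intros c r D [x ->] [Hin [y [Hr Hy]]].
    exists (ctype_of phi I y); split; [eauto|split].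
    + exact (conj (con_direct_subconcept _ _ _ Hin eq_refl) Hy).
    + intros E HE; exact (ctype_of_neg_exists _ _ _ _ _ _ HE Hr).
  - intros c C [x ->] [_ Hs] H; apply In_qm_f in H as [_ Ht].
    rewrite csem_cneg in Hs; exact (Hs (Ht x)).
  - intros C H; apply In_qm_f in H as [_ Hf].
    apply not_all_ex_not in Hf as [x Hx].
    exists (ctype_of phi I x); split; [eauto | intros [_ Hc]; auto].
  - destruct (dom_nonempty I) as [x]; exists (ctype_of phi I x); eauto.
Qed.

Lemma in_ftypes_ftype phi f : in_ftypes phi f -> is_ftype phi f /\ In (fnf phi) f.
Proof. intros [T [o [[_ [_ [Hf [Hphi _]]]] _]]]; auto. Qed.

Lemma sublists_filter {A : Type} (h : A -> bool) l : In (filter h l) (sublists l).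
Proof.
  induction l as [|a l IH]; simpl; auto.
  destruct (h a); apply in_or_app; [left; apply in_map | right]; auto.
Qed.

Lemma Csop_sem phi M I : fsem M phi ->
  fsem I (Csop phi M) <-> fsem I phi /\ ~ seteq (qm_f phi M) (qm_f phi I).
Proof.
  intro HM; unfold Csop; rewrite (proj2 (pdec_true _) HM); simpl.
  rewrite fsem_bigAnd, (ftype_lit_sem_iff _ _ _ (qm_f_ftype phi M)).
  reflexivity.
Qed.

Lemma In_qfilter phi M f : In f (qfilter phi M) <->
  In f (sublists (SubN phi)) /\ in_ftypes phi f /\ ~ seteq f (qm_f phi M).
Proof. unfold qfilter; rewrite filter_In, pdec_true; reflexivity. Qed.

Lemma Cop_sem_qfilter phi M I : fsem M phi ->
  fsem I (Cop phi M) <->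
  exists f, In f (qfilter phi M) /\ forall p, In p (lit f) -> fsem I p.
Proof.
  intro HM; unfold Cop; rewrite (proj2 (pdec_true _) HM).
  destruct (qfilter phi M) as [|f0 L]; [simpl; firstorder|].
  rewrite fsem_bigOr; split.
  - intros [p [Hp Hs]]; apply in_map_iff in Hp as [f [<- Hf]].
    exists f; split; [exact Hf | apply fsem_bigAnd, Hs].
  - intros [f [Hf Hs]]; exists (bigAnd (lit f)).
    split; [exact (in_map (fun g => bigAnd (lit g)) _ _ Hf) | apply fsem_bigAnd, Hs].
Qed.

Lemma Cop_sem phi M I : fsem M phi ->
  fsem I (Cop phi M) <-> fsem I phi /\ ~ seteq (qm_f phi M) (qm_f phi I).
Proof.
  intro HM; rewrite (Cop_sem_qfilter _ _ _ HM); split.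
  - intros [f [Hf Hlit]]; apply In_qfilter in Hf as [_ [Hft Hne]].
    destruct (in_ftypes_ftype _ _ Hft) as [Hftype Hphi].
    apply (ftype_lit_sem_iff _ _ _ Hftype) in Hlit.
    split.
    + apply fsem_fnf, (In_qm_f phi I), Hlit, Hphi.
    + intro HMI; apply Hne; intro p; rewrite (Hlit p), (HMI p); reflexivity.
  - intros [HI Hne]; exists (qm_f phi I); split; [|apply qm_f_lit_sem].
    apply In_qfilter; split; [apply sublists_filter|].
    split; [apply qm_f_in_ftypes, HI|].
    intros Heq; apply Hne; intro p; rewrite (Heq p); reflexivity.
Qed.

Theorem mainTheorem4 : forall (phi : formula) (M : interp),
  fequiv (Cop phi M) (Csop phi M).
Proof.
  intros phi M I.
  destruct (classic (fsem M phi)) as [HM | HM].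
  - rewrite (Cop_sem _ _ _ HM), (Csop_sem _ _ _ HM); reflexivity.
  - unfold Cop, Csop; rewrite (pdec_false _ HM); reflexivity.
Qed.
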